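(* Let $Y,Y'\in\mathfrak o(V,K)$. The special tuples $(Y,e_{n+2})$ and $(Y',e_{n+2})$ are equivalent if and only if there exist $P\in O(V,K)_{e_{n+2}}$ and a vector $w\in V$ such that $$Y'=P\,(Y+L_{w,e_{n+2}})\,P^{-1}.$$ Moreover, in any equivalence between them (i.e. any data $P,v,p,v_0$ as in the definition of equivalence) the real number $v_0$ equals $0$.
   Context: Let $n\ge 0$ be an integer and let $\widetilde K$ be a real symmetric $n\times n$ matrix with $\widetilde K^2=I_n$. Let $V=\mathbb R^{n+2}$ with standard basis $e_1,\dots,e_{n+2}$, and let $K=\begin{pmatrix}0&0&1\\0&\widetilde K&0\\1&0&0\end{pmatrix}$ (block sizes $1,n,1$). For $x,w\in V$ write $x^*=x^TK$ and $L_{u,w}=u\,w^*-w\,u^*$. Let $O(V,K)=\{P:P^TKP=K\}$, $\mathfrak o(V,K)=\{X:X^TK+KX=0\}$, $O(V,K)_{e_{n+2}}=\{P\in O(V,K):Pe_{n+2}=e_{n+2}\}$. A special tuple is a pair $(Y,y)$ with $Y\in\mathfrak o(V,K)$, $y\in V$. Two special tuples $(Y,y)$ and $(Y',y')$ are equivalent if there exist $P\in O(V,K)_{e_{n+2}}$, vectors $v,p\in V$ with $p^*(e_{n+2})=0$, and $v_0\in\mathbb R$ such that $Y'+L_{v,e_{n+2}}=P(Y+L_{p,y})P^{-1}$ and $y'=Py+v_0e_{n+2}$. (A special tuple $(Y,e_{n+2})$ is called a standardized affine special tuple.) *)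

From HB Require Import structures.
From mathcomp Require Import all_boot all_order all_algebra.
From mathcomp Require Import reals.
Set Implicit Arguments. Unset Strict Implicit. Unset Printing Implicit Defensive.
Import Order.TTheory GRing.Theory Num.Theory.
Local Open Scope ring_scope.

Section Defs.
Variables (R : realType) (n : nat).

(* V = R^(n+2) as column vectors; e_1 is index 0, e_(n+2) is index n+1 = ord_max. *)

(* K = [[0,0,1],[0,Kt,0],[1,0,0]] with block sizes 1, n, 1. *)
Definition mid (a : 'I_n) : 'I_(n.+2) := lift ord0 (widen_ord (leqnSn n) a).

Definition Kmat (Kt : 'M[R]_n) : 'M[R]_(n.+2) :=
  delta_mx ord0 ord_max + delta_mx ord_max ord0 +
  \sum_(a < n) \sum_(b < n) Kt a b *: delta_mx (mid a) (mid b).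

Definition elast : 'cV[R]_(n.+2) := delta_mx ord_max 0.

Definition vstar (K : 'M[R]_(n.+2)) (x : 'cV[R]_(n.+2)) : 'rV[R]_(n.+2) :=
  x^T *m K.

Definition Lop (K : 'M[R]_(n.+2)) (u w : 'cV[R]_(n.+2)) : 'M[R]_(n.+2) :=
  u *m vstar K w - w *m vstar K u.

Definition in_O (K P : 'M[R]_(n.+2)) : Prop := P^T *m K *m P = K.

Definition in_O_stab (K P : 'M[R]_(n.+2)) : Prop :=
  in_O K P /\ P *m elast = elast.

Definition in_o (K X : 'M[R]_(n.+2)) : Prop := X^T *m K + K *m X = 0.

Definition equiv_data (K Y : 'M[R]_(n.+2)) (y : 'cV[R]_(n.+2))
    (Y' : 'M[R]_(n.+2)) (y' : 'cV[R]_(n.+2))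
    (P : 'M[R]_(n.+2)) (v p : 'cV[R]_(n.+2)) (v0 : R) : Prop :=
  [/\ in_O_stab K P,
      vstar K p *m elast = 0,
      Y' + Lop K v elast = P *m (Y + Lop K p y) *m invmx P
    & y' = P *m y + v0 *: elast].

Definition special_equiv (K Y : 'M[R]_(n.+2)) (y : 'cV[R]_(n.+2))
    (Y' : 'M[R]_(n.+2)) (y' : 'cV[R]_(n.+2)) : Prop :=
  exists P v p v0, equiv_data K Y y Y' y' P v p v0.

End Defs.

From HB Require Import structures.
From mathcomp Require Import all_boot all_order all_algebra.
From mathcomp Require Import reals.
Import Order.TTheory GRing.Theory Num.Theory.
Local Open Scope ring_scope.
Set Implicit Arguments. Unset Strict Implicit.

(* An isometry P of K satisfies P^-1 = K^-1 P^T K, so conjugating u w^* by P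
   gives (P u)(P w)^*: conjugation maps L_{u,w} to L_{Pu,Pw}.  When P fixes
   e = e_{n+2} this turns P (Y + L_{p,e}) P^-1 into P Y P^-1 + L_{Pp,e}, and
   since L_{u,e} is additive in u, a correction L_{v,e} on the left can be
   absorbed into p (take w = p - P^-1 v), and conversely (take p = 0,
   v = -P w).  Finally e = P e + v0 e = e + v0 e forces v0 = 0. *)

Section Isometries.
Variables (R : realType) (n : nat) (K : 'M[R]_(n.+2)).
Hypothesis K_unit : K \in unitmx.

Lemma in_O_unitmx P : in_O K P -> P \in unitmx.
Proof.
move=> /(congr1 determinant); rewrite !det_mulmx det_tr => detP.
move: K_unit; rewrite !unitmxE !unitfE -{1}detP.
by apply: contraNneq => ->; rewrite mulr0.
Qed.

Lemma in_O_mulmxV P : in_O K P -> K *m invmx P = P^T *m K.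
Proof.
move=> PO; rewrite -{1}PO -!mulmxA.
by rewrite mulmxV ?mulmx1 // in_O_unitmx.
Qed.

Lemma Lop_conj P u w : in_O K P ->
  P *m Lop K u w *m invmx P = Lop K (P *m u) (P *m w).
Proof.
move=> PO; rewrite /Lop /vstar mulmxBr mulmxBl !trmx_mul.
by rewrite !mulmxA -!(mulmxA _ K) !in_O_mulmxV // !mulmxA.
Qed.

Lemma LopDl u1 u2 w : Lop K (u1 + u2) w = Lop K u1 w + Lop K u2 w.
Proof. by rewrite /Lop /vstar linearD /= !mulmxDl mulmxDr opprD addrACA. Qed.

Lemma LopNl u w : Lop K (- u) w = - Lop K u w.
Proof. by rewrite /Lop /vstar linearN /= !mulNmx mulmxN opprK opprB addrC. Qed.

Lemma Lop0l w : Lop K 0 w = 0.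
Proof. by rewrite /Lop /vstar trmx0 !mul0mx mulmx0 subrr. Qed.

Lemma conj_addLop P Y w : in_O_stab K P ->
  P *m (Y + Lop K w (elast R n)) *m invmx P =
  P *m Y *m invmx P + Lop K (P *m w) (elast R n).
Proof. by case=> PO Pe; rewrite mulmxDr mulmxDl Lop_conj // Pe. Qed.

End Isometries.

Section MiddleBlock.
Variables (R : realType) (n : nat).

Definition mid_mx (A : 'M[R]_n) : 'M[R]_(n.+2) :=
  \sum_(a < n) \sum_(b < n) A a b *: delta_mx (mid a) (mid b).

Lemma mid_inj : injective (@mid n).
Proof. by move=> a b /(congr1 val) /= [] /val_inj. Qed.

Lemma mid_neq_max (a : 'I_n) : mid a != ord_max :> 'I_n.+2.
Proof. by rewrite -val_eqE /= eqSS neq_ltn ltn_ord. Qed.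

Lemma delta_mul_mid_mx (a b : 'I_n) A :
  delta_mx (mid a) (mid b) *m mid_mx A =
  \sum_(d < n) A b d *: delta_mx (mid a) (mid d).
Proof.
rewrite /mid_mx mulmx_sumr (bigD1 b) //= [X in _ + X]big1 => [|c /negbTE cb].
  rewrite addr0 mulmx_sumr; apply: eq_bigr => d _.
  by rewrite -scalemxAr mul_delta_mx.
rewrite mulmx_sumr big1 // => d _.
by rewrite -scalemxAr mul_delta_mx_cond (inj_eq mid_inj) eq_sym cb scaler0.
Qed.

Lemma mid_mxM A B : mid_mx A *m mid_mx B = mid_mx (A *m B).
Proof.
rewrite {1}/mid_mx mulmx_suml; apply: eq_bigr => a _.
rewrite mulmx_suml.
under eq_bigr => b _ do rewrite -scalemxAl delta_mul_mid_mx scaler_sumr.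
rewrite exchange_big; apply: eq_bigr => d _.
by rewrite mxE scaler_suml; apply: eq_bigr => b _; rewrite scalerA.
Qed.

Lemma mid_mx_mul_delta0 A (i j : 'I_n.+2) :
  (forall a, mid a != i) -> mid_mx A *m delta_mx i j = 0.
Proof.
move=> i_out; rewrite mulmx_suml big1 // => a _.
rewrite mulmx_suml big1 // => b _.
by rewrite -scalemxAl mul_delta_mx_0 ?scaler0.
Qed.

Lemma delta_mul_mid_mx0 A (i j : 'I_n.+2) :
  (forall a, mid a != i) -> delta_mx j i *m mid_mx A = 0.
Proof.
move=> i_out; rewrite mulmx_sumr big1 // => a _.
rewrite mulmx_sumr big1 // => b _.
by rewrite -scalemxAr mul_delta_mx_0 ?scaler0 // eq_sym.
Qed.

Lemma mx1_split_mid :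
  delta_mx ord0 ord0 + delta_mx ord_max ord_max + mid_mx 1%:M = 1%:M :> 'M[R]_n.+2.
Proof.
have mid_mx1 : mid_mx 1%:M = \sum_(a < n) delta_mx (mid a) (mid a).
  apply: eq_bigr => a _; rewrite (bigD1 a) //= big1 => [|b ba].
    by rewrite mxE eqxx scale1r addr0.
  by rewrite mxE eq_sym (negbTE ba) scale0r.
rewrite mid_mx1 mx1_sum_delta big_ord_recl big_ord_recr /=.
have -> : lift ord0 ord_max = ord_max :> 'I_n.+2 by apply: val_inj.
by rewrite -addrA (addrC (delta_mx ord_max ord_max)).
Qed.

Lemma Kmat_sqr (Kt : 'M[R]_n) : Kt *m Kt = 1%:M -> Kmat Kt *m Kmat Kt = 1%:M.
Proof.
move=> Kt_sqr.
have -> : Kmat Kt = delta_mx ord0 ord_max + delta_mx ord_max ord0 + mid_mx Kt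
  by [].
have out0 (a : 'I_n) : mid a != ord0 by [].
have outmax := mid_neq_max.
rewrite !mulmxDl !mulmxDr mid_mxM Kt_sqr !mid_mx_mul_delta0 // !delta_mul_mid_mx0 //.
rewrite !mul_delta_mx !mul_delta_mx_0 // !addr0 !add0r -mx1_split_mid.
by rewrite addrC.
Qed.

Lemma Kmat_unitmx (Kt : 'M[R]_n) : Kt *m Kt = 1%:M -> Kmat Kt \in unitmx.
Proof. by move/Kmat_sqr/mulmx1_unit => []. Qed.

End MiddleBlock.

Lemma elast_neq0 (R : realType) (n : nat) : elast R n != 0.
Proof.
apply/eqP => /matrixP/(_ ord_max 0); rewrite !mxE !eqxx /=.
by move/eqP; rewrite oner_eq0.
Qed.

Theorem lemma7 (R : realType) (n : nat) (Kt : 'M[R]_n)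
  (HKsym : Kt^T = Kt) (HKinv : Kt *m Kt = 1%:M)
  (Y Y' : 'M[R]_(n.+2))
  (HY : in_o (Kmat Kt) Y) (HY' : in_o (Kmat Kt) Y') :
  (special_equiv (Kmat Kt) Y (elast R n) Y' (elast R n) <->
   exists (P : 'M[R]_(n.+2)) (w : 'cV[R]_(n.+2)),
     in_O_stab (Kmat Kt) P /\
     Y' = P *m (Y + Lop (Kmat Kt) w (elast R n)) *m invmx P)
  /\
  (forall (P : 'M[R]_(n.+2)) (v p : 'cV[R]_(n.+2)) (v0 : R),
     equiv_data (Kmat Kt) Y (elast R n) Y' (elast R n) P v p v0 -> v0 = 0).
Proof.
have K_unit := Kmat_unitmx HKinv.
split; last first.
  move=> P v p v0 [[_ Pe] _ _]; rewrite Pe -{1}[elast R n]addr0.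
  move=> /addrI/esym/eqP; rewrite scalemx_eq0 (negbTE (elast_neq0 R n)) orbF.
  by move/eqP.
split=> [[P [v [p [v0 [POe _ equivY _]]]]] | [P [w [POe ->]]]].
  have P_unit := in_O_unitmx K_unit POe.1.
  exists P, (p - invmx P *m v); split=> //.
  rewrite conj_addLop // mulmxBr mulmxA mulmxV // mul1mx.
  by rewrite LopDl LopNl addrA -conj_addLop // -equivY addrK.
exists P, (- (P *m w)), 0, 0; split=> //.
- by rewrite /vstar trmx0 !mul0mx.
- by rewrite !conj_addLop // mulmx0 Lop0l addr0 LopNl addrK.
- by rewrite scale0r addr0 POe.2.
Qed.
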